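(* Let $\mathcal C\subseteq\{0,1,2\}^n$ be a ternary code all of whose codewords have $\ell_1$-weight $w$. Then $\mathcal C$ is an $(n,2w-2,w)_3$ code if and only if both of the following hold: (a') the cliques $K_u$, $u\in\mathcal C$, form a packing of $K_n$ (i.e., they are pairwise edge-disjoint); (b') each position $i\in[n]$ is colored by $2$ in at most one codeword, i.e., there is at most one $u\in\mathcal C$ with $u_i=2$.
   Context: The $\ell_1$-distance between $u,v\in\{0,1,2\}^n$ is $\sum_i|u_i-v_i|$ and the $\ell_1$-weight of $u$ is its distance to $0$. An $(n,d,w)_3$ code is a set of vectors in $\{0,1,2\}^n$ each of $\ell_1$-weight $w$ with pairwise $\ell_1$-distance at least $d$. $K_n$ is the complete graph on vertex set $[n]$. For $u\in\{0,1,2\}^n$, $K_u$ is the complete subgraph of $K_n$ on vertex set $\mathrm{supp}(u)=\{i:u_i\ne0\}$, with vertex $i$ colored by $u_i$. A packing of a graph is a set of subgraphs such that each edge lies in at most one of them. *)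

From mathcomp Require Import all_boot.
Set Implicit Arguments. Unset Strict Implicit. Unset Printing Implicit Defensive.

Definition tvec (n : nat) := {ffun 'I_n -> 'I_3}.

Definition l1dist n (u v : tvec n) : nat :=
  \sum_(i < n) ((u i - v i) + (v i - u i))%N.

Definition l1weight n (u : tvec n) : nat := \sum_(i < n) (u i : nat).

Definition is_code3 n (d w : nat) (C : {set tvec n}) : Prop :=
  (forall u, u \in C -> l1weight u = w) /\
  (forall u v, u \in C -> v \in C -> u != v -> d <= l1dist u v).

(* support of u : vertex set of K_u *)
Definition supp n (u : tvec n) : {set 'I_n} := [set i | (u i : nat) != 0%N].

Definition edge_in n (u : tvec n) (i j : 'I_n) : bool :=
  [&& i != j, i \in supp u & j \in supp u].

Definition clique_packing n (C : {set tvec n}) : Prop :=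
  forall u v, u \in C -> v \in C -> u != v ->
    forall i j : 'I_n, ~~ (edge_in u i j && edge_in v i j).

Definition two_at_most_once n (C : {set tvec n}) : Prop :=
  forall i : 'I_n, #|[set u in C | (u i : nat) == 2%N]| <= 1.

From mathcomp Require Import all_boot.
From mathcomp Require Import zify.
Set Implicit Arguments.
Unset Strict Implicit.
Unset Printing Implicit Defensive.

(* For codewords u, v of weight w, d(u, v) = 2w - 2 * sum_i min(u_i, v_i).
   Hence d(u, v) >= 2w - 2 iff the overlap sum_i min(u_i, v_i) is at most 1,
   i.e. the supports share at most one position (no common edge of K_u and
   K_v) and there the minimum is 1 (u and v are not both colored 2 at it). *)

Definition overlap n (u v : tvec n) : nat := \sum_(i < n) minn (u i) (v i).

Lemma minn_ternary_le1 (a b : 'I_3) :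
  (minn a b <= 1) = ~~ (((a : nat) == 2) && ((b : nat) == 2)).
Proof. by case: a b => [[|[|[|a]]] ?] [[|[|[|b]]] ?]. Qed.

Section Overlap.

Variables (n : nat) (u v : tvec n).

Lemma l1dist_overlap : l1dist u v + 2 * overlap u v = l1weight u + l1weight v.
Proof.
rewrite /l1dist /overlap /l1weight big_distrr -!big_split /=.
by apply: eq_bigr => i _; lia.
Qed.

Lemma overlap_supp : overlap u v = \sum_(i in supp u :&: supp v) minn (u i) (v i).
Proof.
rewrite /overlap [RHS]big_mkcond /=; apply: eq_bigr => i _.
by rewrite !inE; case: (u i : nat) => [|?]; case: (v i : nat) => [|?]; rewrite ?minn0.
Qed.

Lemma card_supp_le_overlap : #|supp u :&: supp v| <= overlap u v.
Proof.
rewrite overlap_supp -sum1_card; apply: leq_sum => i; rewrite !inE; lia.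
Qed.

Lemma minn_le_overlap i : minn (u i) (v i) <= overlap u v.
Proof. by rewrite /overlap (bigD1 i) //= leq_addr. Qed.

Lemma edge_disjointP :
  (forall i j, ~~ (edge_in u i j && edge_in v i j)) <-> #|supp u :&: supp v| <= 1.
Proof.
split=> [disj | le1 i j].
- apply/card_le1_eqP => i j; rewrite !inE => /andP[ui vi] /andP[uj vj].
  apply/eqP; apply: contraNT (disj i j) => ij.
  by rewrite /edge_in eq_sym ij !inE ui uj vi vj.
- apply/negP => /andP[/and3P[ij ui uj] /and3P[_ vi vj]].
  have := card_le1_eqP le1 i j; rewrite !in_setI ui uj vi vj => /(_ isT isT) eq_ij.
  by rewrite eq_ij eqxx in ij.
Qed.

Lemma overlap_le1P :
  overlap u v <= 1 <->
  (forall i j, ~~ (edge_in u i j && edge_in v i j)) /\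
  (forall i, ~~ (((u i : nat) == 2) && ((v i : nat) == 2))).
Proof.
rewrite edge_disjointP; split=> [le1 | [card_le1 min_le1]].
- split; first exact: leq_trans card_supp_le_overlap le1.
  by move=> i; rewrite -minn_ternary_le1 (leq_trans (minn_le_overlap i)).
- rewrite overlap_supp (leq_trans _ card_le1) // -sum1_card.
  by apply: leq_sum => i _; rewrite minn_ternary_le1.
Qed.

Lemma l1dist_ge_iff_overlap_le1 w :
  l1weight u = w -> l1weight v = w -> (2 * w - 2 <= l1dist u v) = (overlap u v <= 1).
Proof. by move=> uw vw; have := l1dist_overlap; rewrite uw vw; lia. Qed.

End Overlap.

Lemma two_at_most_onceP n (C : {set tvec n}) :
  two_at_most_once C <->
  {in C &, forall u v : tvec n, u != v -> forall i, ~~ (((u i : nat) == 2) && ((v i : nat) == 2))}.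
Proof.
split=> [two u v uC vC uv i | two i].
- apply/andP=> -[ui vi]; have := card_le1_eqP (two i) u v.
  rewrite !inE uC vC ui vi => /(_ isT isT) eq_uv.
  by rewrite eq_uv eqxx in uv.
- apply/card_le1_eqP => u v; rewrite !inE => /andP[uC ui] /andP[vC vi].
  apply/eqP; rewrite eq_sym; apply/negPn/negP => uv.
  by have := two u v uC vC uv i; rewrite ui vi.
Qed.

Theorem corollary1 (n w : nat) (C : {set tvec n}) :
  (forall u, u \in C -> l1weight u = w) ->
  (is_code3 (2 * w - 2) w C <-> clique_packing C /\ two_at_most_once C).
Proof.
move=> Cw.
have dist_iff u v : u \in C -> v \in C ->
    (2 * w - 2 <= l1dist u v) = (overlap u v <= 1).
  by move=> uC vC; apply: l1dist_ge_iff_overlap_le1; apply: Cw.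
rewrite two_at_most_onceP; split=> [[_ Cd] | [packing two]].
- have overlap_le1 u v : u \in C -> v \in C -> u != v -> overlap u v <= 1.
    by move=> uC vC uv; rewrite -dist_iff //; apply: Cd.
  split=> u v uC vC uv; have /overlap_le1P[] := overlap_le1 u v uC vC uv => //.
- split=> // u v uC vC uv; rewrite dist_iff //.
  by apply/overlap_le1P; split; [apply: packing | apply: two].
Qed.
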